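(* Let $M^\star\in\mathbb{R}^{n\times n}$ with $M^\star\succeq0$ and $r^\star=\operatorname{rank}(M^\star)\ge1$, and suppose $X\in\mathbb{R}^{n\times r}$ satisfies $0<\|XX^T-M^\star\|_F\le\rho\,\lambda_{r^\star}(M^\star)$ with $\rho\le1/\sqrt2$. Define the incidence angle $\theta\in[0,\pi/2]$ by \[ \cos\theta=\max_{Y\in\mathbb{R}^{n\times r}}\frac{\langle XX^T-M^\star,XY^T+YX^T\rangle}{\|XX^T-M^\star\|_F\,\|XY^T+YX^T\|_F}. \] Then \[ \sin\theta=\frac{\|(I-XX^\dagger)M^\star(I-XX^\dagger)\|_F}{\|XX^T-M^\star\|_F}\le\frac1{\sqrt2}\frac{\rho}{\sqrt{1-\rho^2}}, \] where $\dagger$ denotes the Moore–Penrose pseudoinverse.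
   Context: Eigenvalues are ordered decreasingly, so $\lambda_{r^\star}(M^\star)$ is the smallest nonzero eigenvalue of $M^\star$. $\langle A,B\rangle=\operatorname{tr}(A^TB)$. The maximum is over $Y$ with $XY^T+YX^T\ne0$. *)

From HB Require Import structures.
From mathcomp Require Import all_boot all_order all_algebra.
From mathcomp Require Import all_classical all_reals all_analysis.
Set Implicit Arguments. Unset Strict Implicit. Unset Printing Implicit Defensive.
Import Order.TTheory GRing.Theory Num.Theory.
Local Open Scope ring_scope.
Local Open Scope classical_set_scope.

Definition mxinner (R : realType) (m n : nat) (A B : 'M[R]_(m, n)) : R :=
  \tr (A^T *m B).

Definition frob (R : realType) (m n : nat) (A : 'M[R]_(m, n)) : R :=
  Num.sqrt (\sum_i \sum_j A i j ^+ 2).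

Definition psd (R : realType) (n : nat) (M : 'M[R]_n) : Prop :=
  M^T = M /\ forall v : 'rV[R]_n, 0 <= (v *m M *m v^T) 0 0.

Definition is_MP_pinv (R : realType) (m n : nat) (A : 'M[R]_(m, n))
  (B : 'M[R]_(n, m)) : Prop :=
  [/\ A *m B *m A = A, B *m A *m B = B,
      (A *m B)^T = A *m B & (B *m A)^T = B *m A].

(* the Moore--Penrose pseudoinverse (it exists and is unique) *)
Definition mp_pinv (R : realType) (m n : nat) (A : 'M[R]_(m, n)) : 'M[R]_(n, m) :=
  xget 0 [set B | is_MP_pinv A B].

(* smallest nonzero eigenvalue; for PSD M of rank r* this is lambda_{r*}(M) *)
Definition lambda_min_nz (R : realType) (n : nat) (M : 'M[R]_n) : R :=
  inf [set a : R | eigenvalue M a /\ a != 0].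

Definition incidence_cos (R : realType) (n r : nat) (Ms : 'M[R]_n)
  (X : 'M[R]_(n, r)) : R :=
  sup [set c : R | exists Y : 'M[R]_(n, r),
         X *m Y^T + Y *m X^T != 0 /\
         c = mxinner (X *m X^T - Ms) (X *m Y^T + Y *m X^T) /
             (frob (X *m X^T - Ms) * frob (X *m Y^T + Y *m X^T))].

Definition incidence_angle (R : realType) (n r : nat) (Ms : 'M[R]_n)
  (X : 'M[R]_(n, r)) : R :=
  acos (incidence_cos Ms X).

(* Write E = X X^T - M* and let P = I - X X^+ be the orthogonal projector onto
   the complement of the range of X, Q = I - P.  Every tangent direction
   X Y^T + Y X^T is orthogonal to P E P = - P M* P, while E - P E P = Q E + E Q - Q E Q
   is itself a tangent direction.  Hence the supremum defining cos(theta) is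
   attained at E - P E P, so cos(theta) = |E - P E P| / |E| and
   sin(theta) = |P M* P| / |E|.
   For the bound put c = |P M* P| and b = |Q M* P|^2.  The block decomposition of
   E gives c^2 + 2 b <= |E|^2.  Since M*^2 - lambda M* is positive semidefinite and
   |P M* P| <= tr (P M* P), also lambda c <= |M* P|^2 = c^2 + b.  Combined with
   |E| <= rho lambda this forces c / |E| <= rho / (2 - rho^2)
   <= rho / sqrt (2 (1 - rho^2)). *)

From HB Require Import structures.
From mathcomp Require Import all_boot all_order all_algebra.
From mathcomp Require Import all_classical all_reals all_analysis.
From mathcomp Require Import complex spectral.
From mathcomp.algebra_tactics Require Import ring lra.
Import Order.TTheory GRing.Theory Num.Theory.
Set Implicit Arguments. Unset Strict Implicit. Unset Printing Implicit Defensive.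
Local Open Scope ring_scope.

Section Frobenius.
Variable R : realType.

Lemma mxinnerE m n (A B : 'M[R]_(m, n)) :
  mxinner A B = \sum_i \sum_j A i j * B i j.
Proof.
rewrite /mxinner /mxtrace exchange_big; apply: eq_bigr => j _.
by rewrite mxE; apply: eq_bigr => i _; rewrite mxE.
Qed.

Lemma mxinnerC m n (A B : 'M[R]_(m, n)) : mxinner A B = mxinner B A.
Proof. by rewrite /mxinner -mxtrace_tr trmx_mul trmxK. Qed.

Lemma mxinner_tr m n (A B : 'M[R]_(m, n)) : mxinner A^T B^T = mxinner A B.
Proof. by rewrite /mxinner trmxK mxtrace_mulC; apply: mxinnerC. Qed.

Lemma mxinnerDr m n (A B C : 'M[R]_(m, n)) :
  mxinner A (B + C) = mxinner A B + mxinner A C.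
Proof. by rewrite /mxinner mulmxDr mxtraceD. Qed.

Lemma mxinnerDl m n (A B C : 'M[R]_(m, n)) :
  mxinner (A + B) C = mxinner A C + mxinner B C.
Proof. by rewrite mxinnerC mxinnerDr !(mxinnerC C). Qed.

Lemma mxinnerNr m n (A B : 'M[R]_(m, n)) : mxinner A (- B) = - mxinner A B.
Proof. by rewrite /mxinner mulmxN linearN. Qed.

Lemma mxinnerNl m n (A B : 'M[R]_(m, n)) : mxinner (- A) B = - mxinner A B.
Proof. by rewrite mxinnerC mxinnerNr mxinnerC. Qed.

Lemma mxinnerZr m n a (A B : 'M[R]_(m, n)) : mxinner A (a *: B) = a * mxinner A B.
Proof. by rewrite /mxinner -scalemxAr linearZ. Qed.

Lemma mxinnerZl m n a (A B : 'M[R]_(m, n)) : mxinner (a *: A) B = a * mxinner A B.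
Proof. by rewrite mxinnerC mxinnerZr mxinnerC. Qed.

Lemma mxinner0r m n (A : 'M[R]_(m, n)) : mxinner A 0 = 0.
Proof. by rewrite /mxinner mulmx0 mxtrace0. Qed.

Lemma mxinner0l m n (A : 'M[R]_(m, n)) : mxinner 0 A = 0.
Proof. by rewrite mxinnerC mxinner0r. Qed.

Lemma mxinner_ge0 m n (A : 'M[R]_(m, n)) : 0 <= mxinner A A.
Proof.
by rewrite mxinnerE; do 2![apply: sumr_ge0 => ? _]; rewrite -expr2 sqr_ge0.
Qed.

Lemma mxinner_eq0 m n (A : 'M[R]_(m, n)) : (mxinner A A == 0) = (A == 0).
Proof.
apply/eqP/eqP => [|->]; last exact: mxinner0r.
have sq_ge0 (x : R) : 0 <= x * x by rewrite -expr2 sqr_ge0.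
rewrite mxinnerE => A0; apply/matrixP => i j; rewrite mxE.
have Ai0 := @psumr_eq0P _ _ _ _ (fun i _ => sumr_ge0 _ (fun j _ => sq_ge0 _)) A0 i isT.
have /eqP := @psumr_eq0P _ _ _ _ (fun j _ => sq_ge0 _) Ai0 j isT.
by rewrite mulf_eq0 orbb => /eqP.
Qed.

Lemma frobE m n (A : 'M[R]_(m, n)) : frob A = Num.sqrt (mxinner A A).
Proof. by rewrite /frob mxinnerE. Qed.

Lemma frob_ge0 m n (A : 'M[R]_(m, n)) : 0 <= frob A.
Proof. by rewrite frobE sqrtr_ge0. Qed.

Lemma frob_sq m n (A : 'M[R]_(m, n)) : frob A ^+ 2 = mxinner A A.
Proof. by rewrite frobE sqr_sqrtr ?mxinner_ge0. Qed.

Lemma frob_gt0 m n (A : 'M[R]_(m, n)) : (0 < frob A) = (A != 0).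
Proof. by rewrite frobE sqrtr_gt0 lt_def mxinner_eq0 mxinner_ge0 andbT. Qed.

Lemma frob0 m n : frob (0 : 'M[R]_(m, n)) = 0.
Proof. by rewrite frobE mxinner0r sqrtr0. Qed.

Lemma frobN m n (A : 'M[R]_(m, n)) : frob (- A) = frob A.
Proof. by rewrite !frobE mxinnerNl mxinnerNr opprK. Qed.

Lemma mxinner_le_frob m n (A B : 'M[R]_(m, n)) : mxinner A B <= frob A * frob B.
Proof.
have [->|A0] := eqVneq A 0; first by rewrite frob0 mul0r mxinner0l.
have [->|B0] := eqVneq B 0; first by rewrite frob0 mulr0 mxinner0r.
set a := frob A; set b := frob B.
have ab_gt0 : 0 < a * b by rewrite mulr_gt0 ?frob_gt0.
have := mxinner_ge0 (b *: A - a *: B).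
rewrite mxinnerDl !mxinnerDr !mxinnerNl !mxinnerNr !mxinnerZl !mxinnerZr.
rewrite (mxinnerC B A) -!frob_sq -/a -/b => sq_ge0.
have : 0 <= (a * b) * (a * b - mxinner A B) by nra.
by rewrite pmulr_rge0 // subr_ge0.
Qed.

Lemma mxinner_pythagoras m n (A B : 'M[R]_(m, n)) : mxinner A B = 0 ->
  mxinner (A + B) (A + B) = mxinner A A + mxinner B B.
Proof.
by move=> AB0; rewrite mxinnerDl !mxinnerDr (mxinnerC B A) AB0 addr0 add0r.
Qed.

End Frobenius.

Section OrthogonalProjection.
Variables (R : realType) (n : nat) (P : 'M[R]_n).
Hypotheses (P_sym : P^T = P) (P_idem : P *m P = P).
Local Notation Q := (1%:M - P).

Lemma proj_compl_sym : Q^T = Q.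
Proof. by rewrite linearB /= trmx1 P_sym. Qed.

Lemma proj_compl_idem : Q *m Q = Q.
Proof. by rewrite mulmxBl mul1mx mulmxBr mulmx1 P_idem subrr subr0. Qed.

Lemma mxinner_proj_compl m (A B : 'M[R]_(n, m)) : mxinner (P *m A) (Q *m B) = 0.
Proof.
rewrite /mxinner trmx_mul P_sym mulmxA -(mulmxA _ P).
by rewrite mulmxBr mulmx1 P_idem subrr mulmx0 mul0mx mxtrace0.
Qed.

Lemma mxinner_split_projl m (A : 'M[R]_(n, m)) :
  mxinner A A = mxinner (P *m A) (P *m A) + mxinner (Q *m A) (Q *m A).
Proof.
rewrite -mxinner_pythagoras ?mxinner_proj_compl //.
by rewrite -mulmxDl addrC subrK mul1mx.
Qed.

Lemma mxinner_split_projr m (A : 'M[R]_(m, n)) :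
  mxinner A A = mxinner (A *m P) (A *m P) + mxinner (A *m Q) (A *m Q).
Proof.
rewrite -[LHS]mxinner_tr mxinner_split_projl.
rewrite -(mxinner_tr (P *m _)) -(mxinner_tr (Q *m _)) !trmx_mul trmxK.
by rewrite P_sym proj_compl_sym.
Qed.

Lemma mxinner_sym_blocks (E : 'M[R]_n) : E^T = E ->
  mxinner E E = mxinner (P *m E *m P) (P *m E *m P)
    + 2 * mxinner (Q *m E *m P) (Q *m E *m P) + mxinner (Q *m E *m Q) (Q *m E *m Q).
Proof.
move=> E_sym; have QEP_tr : (P *m E *m Q)^T = Q *m E *m P.
  by rewrite !trmx_mul P_sym proj_compl_sym E_sym mulmxA.
rewrite (mxinner_split_projr E) !(mxinner_split_projl (E *m _)) !mulmxA.
by rewrite -(mxinner_tr (P *m E *m Q)) QEP_tr; ring.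
Qed.

End OrthogonalProjection.

Section TangentSpace.
Variables (R : realType) (n r : nat) (X : 'M[R]_(n, r)) (Xp : 'M[R]_(r, n)).
Hypotheses (XXpX : X *m Xp *m X = X) (XXp_sym : (X *m Xp)^T = X *m Xp).
Local Notation Q := (X *m Xp).
Local Notation P := (1%:M - X *m Xp).
Local Notation tangent Y := (X *m Y^T + Y *m X^T).

Lemma range_proj_idem : Q *m Q = Q.
Proof. by rewrite mulmxA XXpX. Qed.

Lemma range_proj_complX : P *m X = 0.
Proof. by rewrite mulmxBl mul1mx XXpX subrr. Qed.

Lemma mxinner_tangent_eq0 (N : 'M[R]_n) (Y : 'M[R]_(n, r)) :
  N^T = N -> N *m X = 0 -> mxinner N (tangent Y) = 0.
Proof.
move=> N_sym NX0; have XtN0 : X^T *m N = 0 by rewrite -N_sym -trmx_mul NX0 trmx0.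
rewrite mxinnerDr /mxinner N_sym !mulmxA NX0 mul0mx mxtrace0 add0r.
by rewrite mxtrace_mulC mulmxA XtN0 mul0mx mxtrace0.
Qed.

Lemma sub_compress_tangent (E : 'M[R]_n) : E^T = E ->
  E - P *m E *m P = tangent ((E - 2^-1 *: (Q *m E)) *m Xp^T).
Proof.
move=> E_sym.
have XY : X *m ((E - 2^-1 *: (Q *m E)) *m Xp^T)^T = Q *m E - 2^-1 *: (Q *m E *m Q).
  rewrite trmx_mul trmxK linearB linearZ /= trmx_mul E_sym XXp_sym.
  by rewrite !mulmxBr -!scalemxAr !mulmxA.
have YX : (E - 2^-1 *: (Q *m E)) *m Xp^T *m X^T = E *m Q - 2^-1 *: (Q *m E *m Q).
  by rewrite -mulmxA -trmx_mul XXp_sym mulmxBl -scalemxAl.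
rewrite XY YX mulmxBl mul1mx !mulmxBr !mulmx1 mulmxBl.
move: (Q *m E) (E *m Q) (Q *m E *m Q) => QE EQ QEQ.
by apply/matrixP => i j; rewrite !mxE; lra.
Qed.

End TangentSpace.

Section MoorePenrose.
Variable R : realType.

Lemma gram_unitmx k m (B : 'M[R]_(k, m)) : row_free B -> B *m B^T \in unitmx.
Proof.
move=> B_free; rewrite -row_free_unit -kermx_eq0; apply/eqP/row_matrixP => i.
rewrite row0; set u := row i _.
have uG0 : u *m (B *m B^T) = 0 by apply/sub_kermxP; rewrite row_sub.
have : mxinner (u *m B)^T (u *m B)^T == 0.
  rewrite mxinner_tr /mxinner mxtrace_mulC trmx_mul !mulmxA -(mulmxA u) uG0.
  by rewrite mul0mx mxtrace0.
by rewrite mxinner_eq0 trmx_eq0 mulmx_free_eq0 // => /eqP.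
Qed.

Lemma is_MP_pinv_factor m n k (C : 'M[R]_(m, k)) (F : 'M[R]_(k, n)) :
  C^T *m C \in unitmx -> F *m F^T \in unitmx ->
  is_MP_pinv (C *m F) (F^T *m invmx (F *m F^T) *m invmx (C^T *m C) *m C^T).
Proof.
move=> G1u G2u.
set iG1 := invmx (C^T *m C); set iG2 := invmx (F *m F^T).
have iG1_sym : iG1^T = iG1 by rewrite /iG1 trmx_inv trmx_mul trmxK.
have iG2_sym : iG2^T = iG2 by rewrite /iG2 trmx_inv trmx_mul trmxK.
have AB : C *m F *m (F^T *m iG2 *m iG1 *m C^T) = C *m iG1 *m C^T.
  by rewrite !mulmxA -(mulmxA C F) -(mulmxA C (F *m F^T)) mulmxV // mulmx1.
have BA : F^T *m iG2 *m iG1 *m C^T *m (C *m F) = F^T *m iG2 *m F.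
  by rewrite !mulmxA -(mulmxA _ C^T) -(mulmxA (F^T *m iG2) iG1) mulVmx // mulmx1.
split.
- by rewrite AB !mulmxA -(mulmxA _ C^T) -(mulmxA C iG1) mulVmx // mulmx1.
- rewrite BA !mulmxA -(mulmxA (F^T *m iG2) F) -(mulmxA (F^T *m iG2) (F *m F^T)).
  by rewrite mulmxV // mulmx1.
- by rewrite AB !trmx_mul trmxK iG1_sym mulmxA.
- by rewrite BA !trmx_mul trmxK iG2_sym mulmxA.
Qed.

Lemma mp_pinvP m n (A : 'M[R]_(m, n)) : is_MP_pinv A (mp_pinv A).
Proof.
apply: (xgetPex 0); rewrite -[X in is_MP_pinv X]mulmx_base.
have G1u : (col_base A)^T *m col_base A \in unitmx.
  by rewrite -[X in _ *m X]trmxK gram_unitmx // /row_free mxrank_tr; apply: col_base_full.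
by eexists; apply: is_MP_pinv_factor G1u (gram_unitmx (row_base_free A)).
Qed.

End MoorePenrose.

Section IncidenceAngle.
Variable R : realType.

Lemma sup_cos_orthogonal_split (T : Type) m n (f : T -> 'M[R]_(m, n))
    (E : 'M[R]_(m, n)) y0 :
  0 < frob E -> (forall y, mxinner (E - f y0) (f y) = 0) ->
  sup [set c | exists y, f y != 0 /\ c = mxinner E (f y) / (frob E * frob (f y))]
  = frob (f y0) / frob E.
Proof.
move=> E_gt0 ortho; set S := (X in sup X).
have innerE y : mxinner E (f y) = mxinner (f y0) (f y).
  by rewrite -[E](subrK (f y0)) mxinnerDl ortho add0r.
have S_ub : ubound S (frob (f y0) / frob E).
  move=> _ [y [fy0 ->]]; rewrite innerE ler_pdivrMr ?mulr_gt0 // ?frob_gt0 //.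
  by rewrite mulrA divfK ?gt_eqF // mxinner_le_frob.
have [f0_eq0|f0_neq0] := eqVneq (f y0) 0.
  have S_sub0 : (S `<=` [set 0])%classic.
    by move=> _ [y [_ ->]]; rewrite innerE f0_eq0 mxinner0l mul0r.
  by rewrite f0_eq0 frob0 mul0r; have [->|->] := subset_set1 S_sub0; rewrite ?sup0 ?sup1.
have S_max : S (frob (f y0) / frob E).
  exists y0; split => //; rewrite innerE -frob_sq; field.
  by rewrite (gt_eqF E_gt0) gt_eqF ?frob_gt0.
apply/le_anti; rewrite ge_sup ?ub_le_sup //.
- by exists (frob (f y0) / frob E).
- by exists (frob (f y0) / frob E).
Qed.

Lemma sin_acos_ratio (t s e : R) :
  0 < e -> 0 <= t -> 0 <= s -> t ^+ 2 + s ^+ 2 = e ^+ 2 -> sin (acos (t / e)) = s / e.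
Proof.
move=> e_gt0 t_ge0 s_ge0 pyth.
have t_le_e : t <= e by nra.
rewrite sin_acos; last first.
  by rewrite (le_trans _ (divr_ge0 t_ge0 (ltW e_gt0))) ?lerN10 // ler_pdivrMr // mul1r.
rewrite -(ger0_norm (divr_ge0 s_ge0 (ltW e_gt0))) -sqrtr_sqr; congr Num.sqrt.
by rewrite !expr_div_n -pyth; field; rewrite pyth expf_neq0 // gt_eqF.
Qed.

End IncidenceAngle.

Lemma sqr_le_mul_of_quad_ge0 (F : realFieldType) (a b c : F) :
  (forall s t, 0 <= s ^+ 2 * a + 2 * s * t * c + t ^+ 2 * b) -> c ^+ 2 <= a * b.
Proof.
move=> q; have b_ge0 : 0 <= b by have := q 0 1; nra.
have [b0|b_neq0] := eqVneq b 0.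
  by have := q 1 (- c); have := q (- c) a; rewrite b0; nra.
have : 0 <= b * (a * b - c ^+ 2) by have := q b (- c); nra.
by rewrite pmulr_rge0 ?subr_ge0 // lt_def b_neq0.
Qed.

Section PositiveSemidefinite.
Variables (R : realType) (n : nat).
Implicit Types (C M : 'M[R]_n).

Lemma delta_quad C i j :
  (delta_mx 0 i : 'rV_n) *m C *m (delta_mx 0 j : 'rV_n)^T = (C i j)%:M.
Proof.
rewrite -rowE trmx_delta -colE.
by apply/matrixP => a b; rewrite !ord1 !mxE eqxx mulr1n.
Qed.

Lemma psd_diag_ge0 C i : psd C -> 0 <= C i i.
Proof. by case=> _ /(_ (delta_mx 0 i)); rewrite delta_quad mxE mulr1n. Qed.

Lemma psd_trace_ge0 M : psd M -> 0 <= \tr M.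
Proof. by move=> M_psd; apply: sumr_ge0 => i _; apply: psd_diag_ge0. Qed.

Lemma psd_entry_sqr_le C i j : psd C -> C i j ^+ 2 <= C i i * C j j.
Proof.
case=> C_sym C_quad; apply: sqr_le_mul_of_quad_ge0 => s t.
have Cji : C j i = C i j by rewrite -[in LHS]C_sym mxE.
have := C_quad (s *: delta_mx 0 i + t *: delta_mx 0 j).
rewrite linearD !linearZ /= !mulmxDl !mulmxDr -!scalemxAl -!scalemxAr !delta_quad.
rewrite !mxE !mulr1n Cji.
by congr (0 <= _); ring.
Qed.

Lemma frob_le_trace_psd C : psd C -> frob C <= \tr C.
Proof.
move=> C_psd; rewrite frobE -(ger0_norm (psd_trace_ge0 C_psd)) -sqrtr_sqr ler_wsqrtr //.
rewrite mxinnerE /mxtrace expr2 mulr_suml; apply: ler_sum => i _.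
rewrite mulr_sumr; apply: ler_sum => j _.
by rewrite -expr2; apply: psd_entry_sqr_le.
Qed.

Lemma psd_conj k M (A : 'M[R]_(n, k)) : psd M -> psd (A^T *m M *m A).
Proof.
case=> M_sym M_quad; split; first by rewrite !trmx_mul trmxK M_sym mulmxA.
by move=> v; have := M_quad (v *m A^T); rewrite trmx_mul trmxK !mulmxA.
Qed.

Lemma psd_eigenvalue_ge0 M a : psd M -> eigenvalue M a -> 0 <= a.
Proof.
case=> _ M_quad /eigenvalueP [v vM v_neq0].
have vv_gt0 : 0 < (v *m v^T) 0 0.
  have -> : (v *m v^T) 0 0 = mxinner v^T v^T by rewrite /mxinner trmxK /mxtrace big_ord1.
  by rewrite lt_def mxinner_eq0 trmx_eq0 v_neq0 mxinner_ge0.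
by have := M_quad v; rewrite vM -scalemxAl mxE pmulr_lge0.
Qed.

End PositiveSemidefinite.

Section SpectralQuadratic.
Variable C : numClosedFieldType.
Local Open Scope sesquilinear_scope.

Lemma spectral_diag_eigenvalue n (A : 'M[C]_n) j :
  A \is normalmx -> eigenvalue A (spectral_diag A 0 j).
Proof.
move=> /orthomx_spectralP A_eq; have U_unit := spectral_unit A.
set U := spectralmx A in A_eq U_unit *; set d := spectral_diag A in A_eq *.
apply/eigenvalueP; exists (row j U).
  rewrite -row_mul A_eq !mulmxA mulmxV // mul1mx row_mul row_diag_mx.
  by rewrite -scalemxAl -rowE.
apply/eqP => Uj0; have := congr1 (mulmx^~ (invmx U)) Uj0.
rewrite mul0mx -row_mul mulmxV // => /rowP/(_ j); rewrite !mxE eqxx /=.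
by move/eqP; rewrite oner_eq0.
Qed.

Lemma normalmx_quad_sqr_sub_scale_ge0 n (A : 'M[C]_n) (l : C) (v : 'rV[C]_n) :
  A \is normalmx ->
  (forall j, 0 <= spectral_diag A 0 j * (spectral_diag A 0 j - l)) ->
  0 <= (v *m (A *m A - l *: A) *m v ^t* ) 0 0.
Proof.
move=> /orthomx_spectralP A_eq d_ge0; set U := spectralmx A in A_eq.
set d := spectral_diag A in A_eq d_ge0.
have /unitarymxP UU : U \is unitarymx := spectral_unitarymx A.
rewrite invmx_unitary ?spectral_unitarymx // in A_eq.
pose e := \row_k (d 0 k * (d 0 k - l)).
have -> : A *m A - l *: A = U ^t* *m diag_mx e *m U.
  have -> : diag_mx e = diag_mx d *m diag_mx d - l *: diag_mx d.
    apply/matrixP => i k; rewrite mul_mx_diag !mxE.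
    by case: eqP => [->|_] /=; rewrite ?mulr1n ?mulr0n; ring.
  rewrite A_eq !mulmxA -(mulmxA _ U) UU mulmx1 mulmxBr mulmxBl.
  by rewrite -scalemxAr -scalemxAl !mulmxA.
set w := v *m U ^t*.
have -> : v *m (U ^t* *m diag_mx e *m U) *m v ^t* = w *m diag_mx e *m w ^t*.
  by rewrite /w trmx_mul map_mxM trmxCK !mulmxA.
rewrite mul_mx_diag mxE; apply: sumr_ge0 => k _; rewrite !mxE.
by rewrite mulrAC; apply: mulr_ge0 (mul_conjC_ge0 _) (d_ge0 k).
Qed.

End SpectralQuadratic.

Section RealSymmetric.
Variable R : realType.
Local Open Scope sesquilinear_scope.
Local Open Scope complex_scope.

Lemma eigenvalue_map_complex n (M : 'M[R]_n) (a : R) :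
  eigenvalue (map_mx (real_complex R) M) a%:C = eigenvalue M a.
Proof. by rewrite !eigenvalue_root_char -map_char_poly fmorph_root. Qed.

Lemma psd_sqr_sub_scale n (M : 'M[R]_n) (l : R) :
  M^T = M -> (forall a, eigenvalue M a -> 0 <= a * (a - l)) -> psd (M *m M - l *: M).
Proof.
move=> M_sym eig_ge0; split; first by rewrite linearB linearZ /= trmx_mul M_sym.
(* The spectral theorem is available over closed fields only, so we diagonalize
   M as a complex Hermitian matrix. *)
move=> v; set Mc := map_mx (real_complex R) M; set vc := map_mx (real_complex R) v.
have Mc_herm : Mc \is hermsymmx.
  apply: realsym_hermsym.
    by apply/is_hermitianmxP; rewrite expr0 scale1r map_mx_id // /Mc map_trmx M_sym.
  by apply/mxOverP => i j; rewrite !mxE; apply/complex_realP; exists (M i j).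
have vc_adj : vc ^t* = vc^T.
  apply/matrixP => i k; rewrite !mxE conj_Creal //.
  by apply/complex_realP; exists (v k i).
have quad_map : map_mx (real_complex R) (v *m (M *m M - l *: M) *m v^T)
    = vc *m (Mc *m Mc - l%:C *: Mc) *m vc ^t*.
  by rewrite vc_adj !map_mxM map_mxB map_mxM map_mxZ map_trmx.
have /matrixP/(_ 0 0) := quad_map.
rewrite mxE /= -ler0c => ->.
apply: normalmx_quad_sqr_sub_scale_ge0 (hermitian_normalmx Mc_herm) _ => j.
have /complex_realP [a da] := mxOverP (hermitian_spectral_diag_real Mc_herm) 0 j.
rewrite da -rmorphB -rmorphM ler0c; apply: eig_ge0.
by rewrite -eigenvalue_map_complex -da spectral_diag_eigenvalue // hermitian_normalmx.
Qed.

End RealSymmetric.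

Section SmallestNonzeroEigenvalue.
Variables (R : realType) (n : nat) (M : 'M[R]_n).
Hypothesis M_psd : psd M.

Lemma lambda_min_nz_ge0 : 0 <= lambda_min_nz M.
Proof.
rewrite /lambda_min_nz; set S := (X in inf X).
have [->|/set0P S_ne] := eqVneq S set0; first by rewrite inf0.
by apply: lb_le_inf S_ne _ => a [a_eig _]; apply: psd_eigenvalue_ge0 M_psd a_eig.
Qed.

Lemma lambda_min_nz_le a : eigenvalue M a -> a != 0 -> lambda_min_nz M <= a.
Proof.
move=> a_eig a_neq0; apply: ge_inf; last by split.
by exists 0 => b [b_eig _]; apply: psd_eigenvalue_ge0 M_psd b_eig.
Qed.

Lemma lambda_min_nz_trace_le k (A : 'M[R]_(n, k)) :
  lambda_min_nz M * \tr (A^T *m M *m A) <= mxinner (M *m A) (M *m A).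
Proof.
have sq_psd : psd (M *m M - lambda_min_nz M *: M).
  apply: psd_sqr_sub_scale M_psd.1 _ => a a_eig; have [->|a_neq0] := eqVneq a 0.
    by rewrite mul0r.
  by rewrite mulr_ge0 ?subr_ge0 ?lambda_min_nz_le // (psd_eigenvalue_ge0 M_psd a_eig).
have := psd_trace_ge0 (psd_conj A sq_psd).
rewrite mulmxBr mulmxBl -scalemxAr -scalemxAl linearB linearZ /= subr_ge0.
by rewrite /mxinner trmx_mul M_psd.1 !mulmxA.
Qed.

End SmallestNonzeroEigenvalue.

Section IncidenceOfFactor.
Variables (R : realType) (n r : nat) (Ms : 'M[R]_n) (X : 'M[R]_(n, r)).
Hypothesis Ms_sym : Ms^T = Ms.
Local Notation Q := (X *m mp_pinv X).
Local Notation P := (1%:M - X *m mp_pinv X).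
Local Notation E := (X *m X^T - Ms).

Let XQ : Q *m X = X. Proof. by case: (mp_pinvP X). Qed.
Let Q_sym : Q^T = Q. Proof. by case: (mp_pinvP X). Qed.
Let P_sym : P^T = P := proj_compl_sym Q_sym.
Let P_idem : P *m P = P := proj_compl_idem (range_proj_idem XQ).
Let PX : P *m X = 0 := range_proj_complX XQ.
Let XtP : X^T *m P = 0. Proof. by rewrite -P_sym -trmx_mul PX trmx0. Qed.
Let E_sym : E^T = E. Proof. by rewrite linearB /= trmx_mul trmxK Ms_sym. Qed.

Lemma compl_residual_compl : P *m E *m P = - (P *m Ms *m P).
Proof. by rewrite [P *m E]mulmxBr mulmxBl mulmxA PX !mul0mx sub0r. Qed.

Lemma range_residual_compl : Q *m E *m P = - (Q *m Ms *m P).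
Proof.
rewrite [Q *m E]mulmxBr mulmxBl -(mulmxA Q (X *m X^T)) -(mulmxA X X^T) XtP.
by rewrite !mulmx0 sub0r.
Qed.

Lemma sin_incidence_angle : 0 < frob E ->
  sin (incidence_angle Ms X) = frob (P *m Ms *m P) / frob E.
Proof.
move=> E_gt0; set Y0 := (E - 2^-1 *: (Q *m E)) *m (mp_pinv X)^T.
have T_eq := sub_compress_tangent Q_sym E_sym; rewrite -/Y0 in T_eq.
have PEP_sym : (P *m E *m P)^T = P *m E *m P by rewrite !trmx_mul P_sym E_sym mulmxA.
have PEP_X : P *m E *m P *m X = 0 by rewrite -mulmxA PX mulmx0.
have ortho Y : mxinner (E - (X *m Y0^T + Y0 *m X^T)) (X *m Y^T + Y *m X^T) = 0.
  by rewrite -T_eq opprB addrC subrK mxinner_tangent_eq0.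
rewrite /incidence_angle /incidence_cos (sup_cos_orthogonal_split (y0 := Y0) E_gt0 ortho).
rewrite -[frob (P *m Ms *m P)]frobN -compl_residual_compl.
apply: sin_acos_ratio; rewrite ?frob_ge0 //.
rewrite !frob_sq -T_eq -mxinner_pythagoras ?subrK // mxinnerC T_eq.
exact: mxinner_tangent_eq0.
Qed.

Lemma frob_residual_sqr_ge :
  frob (P *m Ms *m P) ^+ 2 + 2 * mxinner (Q *m Ms *m P) (Q *m Ms *m P) <= frob E ^+ 2.
Proof.
rewrite !frob_sq (mxinner_sym_blocks P_sym P_idem E_sym) subKr.
rewrite compl_residual_compl range_residual_compl !mxinnerNl !mxinnerNr !opprK.
by rewrite lerDl mxinner_ge0.
Qed.

Lemma lambda_frob_compress_le : psd Ms ->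
  lambda_min_nz Ms * frob (P *m Ms *m P)
  <= frob (P *m Ms *m P) ^+ 2 + mxinner (Q *m Ms *m P) (Q *m Ms *m P).
Proof.
move=> Ms_psd; have := mxinner_split_projl P_sym P_idem (Ms *m P).
rewrite subKr !mulmxA frob_sq => <-.
apply: le_trans (lambda_min_nz_trace_le Ms_psd P); rewrite P_sym.
apply: ler_wpM2l; first exact: lambda_min_nz_ge0.
by apply: frob_le_trace_psd; rewrite -[X in psd (X *m _ *m _)]P_sym; apply: psd_conj.
Qed.

End IncidenceOfFactor.

Section IncidenceBound.
Variable R : rcfType.

Lemma ratio_le_div_two_sub_sqr (e c rho : R) :
  0 < e -> 0 <= c <= e -> 0 <= rho -> rho ^+ 2 < 2 ->
  2 * e * c <= rho * (e ^+ 2 + c ^+ 2) -> c / e <= rho / (2 - rho ^+ 2).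
Proof.
move=> e_gt0 /andP[c_ge0 c_le_e] rho_ge0 rho2_lt2 ineq.
have rho_c2_le : rho * c ^+ 2 <= rho * e ^+ 2 by apply: ler_wpM2l => //; nra.
have c_le : c <= rho * e by nra.
have rho_c_ge0 : 0 <= rho * c by rewrite mulr_ge0.
have : e * (c * (2 - rho ^+ 2)) <= e * (rho * e) by nra.
rewrite ler_pM2l // => le.
by rewrite ler_pdivrMr // mulrAC ler_pdivlMr // subr_gt0.
Qed.

Lemma div_two_sub_sqr_le (rho : R) : 0 <= rho -> rho ^+ 2 < 1 ->
  rho / (2 - rho ^+ 2) <= 1 / Num.sqrt 2 * (rho / Num.sqrt (1 - rho ^+ 2)).
Proof.
move=> rho_ge0 rho2_lt1.
rewrite mul1r mulrCA -invfM -sqrtrM // ler_wpM2l // lef_pV2 ?posrE ?sqrtr_gt0; try lra.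
by rewrite -[X in _ <= X]ger0_norm -?sqrtr_sqr ?ler_wsqrtr //; nra.
Qed.

Lemma incidence_ratio_le (e c l b rho : R) :
  0 < e -> 0 <= c -> 0 <= l -> 0 <= b -> e <= rho * l -> rho <= 1 / Num.sqrt 2 ->
  c ^+ 2 + 2 * b <= e ^+ 2 -> l * c <= c ^+ 2 + b ->
  c / e <= 1 / Num.sqrt 2 * (rho / Num.sqrt (1 - rho ^+ 2)).
Proof.
move=> e_gt0 c_ge0 l_ge0 b_ge0 e_le rho_le blocks lc_le.
have rho_gt0 : 0 < rho.
  rewrite ltNge; apply/negP => rho_le0.
  have : rho * l <= 0 by rewrite mulr_le0_ge0.
  lra.
have rho2_le : rho ^+ 2 * 2 <= 1.
  have sqrt2_gt0 : 0 < Num.sqrt 2 :> R by rewrite sqrtr_gt0; lra.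
  move: rho_le; rewrite ler_pdivlMr // => rho_sqrt2_le.
  have : (rho * Num.sqrt 2) ^+ 2 <= 1 by rewrite expr_le1 // mulr_ge0 ?ltW.
  by rewrite exprMn sqr_sqrtr //; lra.
have c_le_e : c <= e by nra.
have ineq : 2 * e * c <= rho * (e ^+ 2 + c ^+ 2).
  have := ler_wpM2r c_ge0 e_le.
  have : rho * (2 * l * c) <= rho * (e ^+ 2 + c ^+ 2).
    by apply: ler_wpM2l; [exact: ltW | lra].
  lra.
apply: le_trans (div_two_sub_sqr_le (ltW rho_gt0) _); last by lra.
apply: ratio_le_div_two_sub_sqr => //; [by rewrite c_ge0 c_le_e | exact: ltW | lra].
Qed.

End IncidenceBound.

Unset Implicit Arguments.

Theorem lemma19 (R : realType) (n r : nat) (Ms : 'M[R]_n) (X : 'M[R]_(n, r))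
  (rho : R) :
  psd Ms -> (1 <= \rank Ms)%N ->
  0 < frob (X *m X^T - Ms) ->
  frob (X *m X^T - Ms) <= rho * lambda_min_nz Ms ->
  rho <= 1 / Num.sqrt 2 ->
  let theta := incidence_angle Ms X in
  let P := 1%:M - X *m mp_pinv X in
  sin theta = frob (P *m Ms *m P) / frob (X *m X^T - Ms) /\
  sin theta <= 1 / Num.sqrt 2 * (rho / Num.sqrt (1 - rho ^+ 2)).
Proof.
move=> Ms_psd _ E_gt0 E_le rho_le theta P; rewrite /theta /P.
rewrite sin_incidence_angle //; last exact: Ms_psd.1.
split=> //; apply: (incidence_ratio_le E_gt0 (frob_ge0 _) (lambda_min_nz_ge0 Ms_psd)
  (mxinner_ge0 _) E_le rho_le (frob_residual_sqr_ge X Ms_psd.1)).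
exact: lambda_frob_compress_le.
Qed.
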